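(* Let $G$ be a finitely presented group with non-trivial finite residual $R_G$. Let $s_1,\ldots,s_m$ be non-trivial elements of $G$ contained in $R_G$, let $S=\{s_1,\ldots,s_m\}$ and let $H$ be the normal subgroup of $G$ generated by $S$. Then \[rdef(G/H)\ge rdef(G)-relsize(S;G,R_G).\]
   Context: $R_G$ is the intersection of all finite index subgroups of $G$. Residual deficiency: for a finitely presented group $K$ and finite presentation $Q=\langle X\mid R\rangle$ with $X$ freely generating $F_n$, $\varphi:F_n\to K$ canonical, write $R=\{u_1^{m_1},\ldots,u_t^{m_t}\}$ with $u_i$ not proper powers in $F_n$, let $k_i$ be the order of $\varphi(u_i)R_K$ in $K/R_K$; $rdef(Q)=n-\sum 1/k_i$ and $rdef(K)=\sup_Q rdef(Q)$ over finite presentations. Relative size: for $g\in G$ and $\pi:G\to G/R_G$, if $g\in R_G$, $\nu(g;G,R_G)$ is the supremum of the orders of $\pi(a)$ over all $a\in G$ with $a^n=g$ for some integer $n$; if $g\notin R_G$ it is the supremum of non-zero integers $n$ with $g=a^n$ for some $a\in G$; $\nu^{-1}:=0$ if $\nu$ is infinite; $relsize(S;G,R_G)=\sum_{i=1}^m\nu(s_i;G,R_G)^{-1}$. *)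

From HB Require Import structures.
From mathcomp Require Import all_boot all_order all_algebra.
From mathcomp Require Import monoid.
From mathcomp Require Import all_classical all_reals ereal.

Set Implicit Arguments.
Unset Strict Implicit.
Unset Printing Implicit Defensive.

Import Order.TTheory GRing.Theory Num.Theory.

Local Open Scope classical_set_scope.

(* A letter (i, false) is x_i, (i, true) is x_i^{-1}.                   *)
(* Elements of the free group F_n are represented by words; two words  *)
(* represent the same element of F_n iff their free reductions agree.  *)
Definition letter (n : nat) := ('I_n * bool)%type.
Definition word (n : nat) := seq (letter n).

Definition linv n (a : letter n) : letter n := (a.1, ~~ a.2).

Definition cons_red n (a : letter n) (s : word n) : word n :=
  if s is b :: s' then (if b == linv a then s' else a :: s) else [:: a].

Definition fred n (w : word n) : word n := foldr (@cons_red n) [::] w.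

Definition winv n (w : word n) : word n := rev (map (@linv n) w).

Definition wpow n (u : word n) (m : nat) : word n := flatten (nseq m u).

Definition proper_power n (u : word n) : Prop :=
  exists (v : word n) (k : nat), (2 <= k)%N /\ fred u = fred (wpow v k).

Definition in_nclosure_F n (rels : seq (word n)) (w : word n) : Prop :=
  exists l : seq (word n * word n * bool),
    (forall t, t \in l -> t.1.2 \in rels) /\
    fred w = fred (flatten [seq t.1.1 ++ (if t.2 then winv t.1.2 else t.1.2)
                                 ++ winv t.1.1 | t <- l]).

Local Open Scope group_scope.

Definition eval_word (K : groupType) n (f : 'I_n -> K) (w : word n) : K :=
  foldr (fun a x => (if a.2 then (f a.1)^-1 else f a.1) * x) 1 w.

Definition is_presentation (K : groupType) n (rels : seq (word n))
    (f : 'I_n -> K) : Prop :=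
  (forall x : K, exists w : word n, eval_word f w = x) /\
  (forall w : word n, eval_word f w = 1 <-> in_nclosure_F rels w).

Definition finitely_presented (K : groupType) : Prop :=
  exists n (rels : seq (word n)) (f : 'I_n -> K), is_presentation rels f.

Definition is_subgroup (K : groupType) (H : K -> Prop) : Prop :=
  H 1 /\ (forall x y, H x -> H y -> H (x * y)) /\ (forall x, H x -> H x^-1).

Definition finite_index (K : groupType) (H : K -> Prop) : Prop :=
  exists reps : seq K, forall x : K, exists2 r, r \in reps & H (r^-1 * x).

Definition in_finres (K : groupType) (x : K) : Prop :=
  forall H : K -> Prop, is_subgroup H -> finite_index H -> H x.

Definition gexpz (K : groupType) (a : K) (z : int) : K :=
  match z with
  | Posz k => a ^+ k
  | Negz k => (a ^+ k.+1)^-1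
  end.

Definition in_nclosure (K : groupType) (S : seq K) (x : K) : Prop :=
  exists l : seq (K * K * bool),
    (forall t, t \in l -> t.1.2 \in S) /\
    x = foldr (fun t acc =>
                 (t.1.1^-1 * (if t.2 then t.1.2^-1 else t.1.2) * t.1.1) * acc)
              1 l.

Local Close Scope group_scope.
Local Open Scope ring_scope.
Local Open Scope ereal_scope.

(* order of the image of g in K / R_K (+oo if infinite) *)
Definition ord_mod_res (R : realType) (K : groupType) (g : K) : \bar R :=
  ereal_inf [set ((k%:R : R)%:E) | k in
             [set k : nat | (0 < k)%N /\ in_finres (g ^+ k)%g]].

(* x^{-1}, with the convention (+oo)^{-1} := 0 *)
Definition einv (R : realType) (x : \bar R) : R :=
  match x with EFin r => (r^-1)%R | _ => 0%R end.

Definition rdef (R : realType) (K : groupType) : \bar R :=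
  ereal_sup [set x : \bar R | exists (n : nat) (ps : seq (word n * nat))
      (f : 'I_n -> K),
      (forall p, p \in ps -> ~ proper_power p.1 /\ (0 < p.2)%N) /\
      is_presentation [seq wpow p.1 p.2 | p <- ps] f /\
      x = ((n%:R - \sum_(p <- ps) einv (ord_mod_res R (eval_word f p.1)))%R)%:E].

Definition nu (R : realType) (K : groupType) (g : K) : \bar R :=
  if `[< in_finres g >] then
    ereal_sup [set ord_mod_res R a | a in
               [set a : K | exists z : int, gexpz a z = g]]
  else
    ereal_sup [set ((z%:~R : R)%:E) | z in
               [set z : int | z != 0%R /\ exists a : K, g = gexpz a z]].

Definition relsize (R : realType) (K : groupType) (S : seq K) : R :=
  (\sum_(s <- S) einv (nu R s))%R.

From HB Require Import structures.
From mathcomp Require Import all_boot all_order all_algebra.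
From mathcomp Require Import monoid.
From mathcomp Require Import all_classical all_reals ereal.
From mathcomp Require Import zify lra.

(* Take a presentation <X | u_1^m_1, ..., u_t^m_t> of G; the relator u_i^m_i
   costs 1/ord(u_i), the order being taken modulo the finite residual.  For
   every s_j choose a root b_j^k_j = s_j (k_j > 0) whose order modulo R_G nearly
   attains nu(s_j), and a word c_j representing b_j.  Adjoining generators y_j
   with relators y_j^-1 c_j and y_j^k_j presents G/H.  The new relators are not
   proper powers (y_j has exponent sum -1, resp. 1, in them); each y_j^-1 c_j
   costs at most 1, which the new generator y_j pays for, and y_j^k_j costs at
   most 1/ord(b_j), about 1/nu(s_j).  The old relators cost no more in G/H than
   in G: since S lies in R_G, the preimage of R_(G/H) lies in R_G, so orders
   modulo the finite residual can only grow in the quotient. *)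

Set Implicit Arguments.
Unset Strict Implicit.
Unset Printing Implicit Defensive.

Import Order.TTheory GRing.Theory Num.Theory.

(** * Free reduction *)

Fixpoint reduced n (w : word n) : bool :=
  if w is a :: ((b :: _) as t) then (b != linv a) && reduced t else true.

Lemma linvK n : involutive (@linv n).
Proof. by case=> i b; rewrite /linv /= negbK. Qed.

Lemma reduced_cons_red n (a : letter n) s : reduced s -> reduced (cons_red a s).
Proof.
case: s => [|b s] //= Hs; case: ifP => [_|/= -> //].
by case: s Hs => [|c s] //= /andP[].
Qed.

Lemma reduced_foldr_cons_red n (t u : word n) :
  reduced t -> reduced (foldr (@cons_red n) t u).
Proof. by move=> Ht; elim: u => //= a u IH; apply: reduced_cons_red. Qed.

Lemma fred_reduced n (w : word n) : reduced (fred w).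
Proof. exact: reduced_foldr_cons_red. Qed.

Lemma fred_id n (w : word n) : reduced w -> fred w = w.
Proof.
elim: w => // a t IH /= Hr.
have Ht : reduced t by case: t Hr IH => // b t /andP[].
rewrite /fred /= -/(fred t) (IH Ht).
by case: t Hr {IH Ht} => //= b t /andP[/negbTE -> _].
Qed.

Lemma fredK n (w : word n) : fred (fred w) = fred w.
Proof. exact/fred_id/fred_reduced. Qed.

Lemma cons_red_linvK n (a : letter n) s :
  reduced s -> cons_red a (cons_red (linv a) s) = s.
Proof.
case: s => [|b s] /=; first by rewrite eqxx.
case: ifP => [/eqP|_ _]; last by rewrite /= eqxx.
rewrite linvK => -> Hr.
by case: s Hr => [|c s] //= /andP[/negbTE -> _].
Qed.

Lemma foldr_cons_red_fred n (t u : word n) : reduced t ->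
  foldr (@cons_red n) t u = foldr (@cons_red n) t (fred u).
Proof.
move=> Ht; elim: u => //= a u ->; rewrite /fred /= -/(fred u).
case E: (fred u) => [|b s] //=; case: ifP => [/eqP Eb|] //.
by rewrite Eb cons_red_linvK // reduced_foldr_cons_red.
Qed.

Lemma fred_cat n (x y : word n) : fred (x ++ y) = foldr (@cons_red n) (fred y) x.
Proof. by rewrite /fred foldr_cat. Qed.

Lemma fred_catl n (x y : word n) : fred (x ++ y) = fred (fred x ++ y).
Proof. by rewrite !fred_cat; apply/foldr_cons_red_fred/fred_reduced. Qed.

Lemma fred_catr n (x y : word n) : fred (x ++ y) = fred (x ++ fred y).
Proof. by rewrite !fred_cat fredK. Qed.

Lemma fred_cat_congr n (x x' y y' : word n) :
  fred x = fred x' -> fred y = fred y' -> fred (x ++ y) = fred (x' ++ y').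
Proof. by move=> Ex Ey; rewrite fred_catl Ex -fred_catl fred_catr Ey -fred_catr. Qed.

Lemma winv_cat n (x y : word n) : winv (x ++ y) = winv y ++ winv x.
Proof. by rewrite /winv map_cat rev_cat. Qed.

Lemma winvK n : involutive (@winv n).
Proof.
by move=> x; rewrite /winv map_rev revK -map_comp map_id_in // => a _; rewrite /= linvK.
Qed.

Lemma winv_cons n a (x : word n) : winv (a :: x) = winv x ++ [:: linv a].
Proof. by rewrite /winv /= rev_cons cats1. Qed.

Lemma fred_cat_winv n (x : word n) : fred (x ++ winv x) = [::].
Proof.
elim: x => //= a x IH.
by rewrite winv_cons catA /fred /= -/(fred _) fred_catl IH /= eqxx.
Qed.

Lemma fred_winv_cat n (x : word n) : fred (winv x ++ x) = [::].
Proof. by rewrite -{2}(winvK x) fred_cat_winv. Qed.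

Lemma fred_cancel n (x g y : word n) : fred (x ++ g ++ winv g ++ y) = fred (x ++ y).
Proof. by rewrite fred_catr (catA g) (fred_catl (g ++ _)) fred_cat_winv -fred_catr. Qed.

Lemma fred_cancelV n (x g y : word n) : fred (x ++ winv g ++ g ++ y) = fred (x ++ y).
Proof. by rewrite -{2}(winvK g) fred_cancel. Qed.

Lemma fred_winv_congr n (x y : word n) : fred x = fred y -> fred (winv x) = fred (winv y).
Proof.
move=> E; have -> : fred (winv x) = fred (winv x ++ y ++ winv y ++ [::]).
  by rewrite fred_cancel cats0.
by rewrite catA fred_catl (fred_catr (winv x)) -E -fred_catr fred_winv_cat cats0.
Qed.

Lemma wpowS n (u : word n) k : wpow u k.+1 = u ++ wpow u k.
Proof. by []. Qed.

(** * Substitutions and normal closures of words *)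

Definition wsubst n n' (h : letter n -> word n') (w : word n) : word n' :=
  flatten (map h w).

Definition wsubst_compat n n' (h : letter n -> word n') :=
  forall a, h (linv a) = winv (h a).

Section Substitution.
Variables (n n' : nat) (h : letter n -> word n').

Lemma wsubst_cat x y : wsubst h (x ++ y) = wsubst h x ++ wsubst h y.
Proof. by rewrite /wsubst map_cat flatten_cat. Qed.

Lemma wsubst_cons a x : wsubst h (a :: x) = h a ++ wsubst h x.
Proof. by []. Qed.

Lemma wsubst_wpow u k : wsubst h (wpow u k) = wpow (wsubst h u) k.
Proof. by elim: k => //= k IH; rewrite wsubst_cat IH. Qed.

Hypothesis hP : wsubst_compat h.

Lemma wsubst_winv x : wsubst h (winv x) = winv (wsubst h x).
Proof.
elim: x => //= a x IH.
by rewrite winv_cons wsubst_cat IH wsubst_cons winv_cat /wsubst /= cats0 hP.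
Qed.

Lemma fred_wsubst w : fred (wsubst h w) = fred (wsubst h (fred w)).
Proof.
elim: w => // a w IH.
rewrite wsubst_cons fred_catr IH -fred_catr /fred /= -/(fred w).
case: (fred w) => [|b s] //=; case: ifP => [/eqP ->|//].
by rewrite wsubst_cons hP -/(fred _) -[_ ++ _]cat0s fred_cancel.
Qed.

Lemma fred_wsubst_congr x y : fred x = fred y -> fred (wsubst h x) = fred (wsubst h y).
Proof. by move=> E; rewrite fred_wsubst E -fred_wsubst. Qed.

End Substitution.

Section NormalClosure.
Variables (n : nat) (rels : seq (word n)).
Local Notation N := (in_nclosure_F rels).

Lemma nclosureF_nil : N [::].
Proof. by exists [::]. Qed.

Lemma nclosureF_fred x y : fred x = fred y -> N x -> N y.
Proof. by move=> E [l [H1 H2]]; exists l; split => //; rewrite -E. Qed.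

Lemma nclosureF_cat x y : N x -> N y -> N (x ++ y).
Proof.
move=> [l1 [H1 E1]] [l2 [H2 E2]]; exists (l1 ++ l2); split.
  by move=> t; rewrite mem_cat => /orP[/H1|/H2].
by rewrite map_cat flatten_cat; apply: fred_cat_congr.
Qed.

Lemma nclosureF_conj_rel g r (b : bool) :
  r \in rels -> N (g ++ (if b then winv r else r) ++ winv g).
Proof.
move=> Hr; exists [:: (g, r, b)]; split; last by rewrite /= cats0.
by move=> t; rewrite inE => /eqP ->.
Qed.

Lemma nclosureF_rel r : r \in rels -> N r.
Proof. by move/(nclosureF_conj_rel [::] false); rewrite /= cats0. Qed.

Lemma nclosureF_conj g x : N x -> N (g ++ x ++ winv g).
Proof.
move=> [l [H1 E]].
apply: (@nclosureF_fred (g ++ flatten [seq t.1.1 ++ (if t.2 then winv t.1.2 else t.1.2)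
                                 ++ winv t.1.1 | t <- l] ++ winv g)).
  by apply: fred_cat_congr => //; apply: fred_cat_congr.
elim: l H1 {E} => [|t l IH] H1.
  by apply: (@nclosureF_fred [::]); [rewrite /= fred_cat_winv|apply: nclosureF_nil].
rewrite /= -catA; move: (flatten _) IH => B IH.
set r := _ ++ _ ++ winv t.1.1.
apply: (@nclosureF_fred ((g ++ r ++ winv g) ++ (g ++ B ++ winv g))).
  by have := fred_cancelV (g ++ r) g (B ++ winv g); rewrite -!catA.
apply: nclosureF_cat; last by apply: IH => t' Ht'; rewrite H1 // inE Ht' orbT.
have := nclosureF_conj_rel (g ++ t.1.1) t.2 (H1 t (mem_head _ _)).
by rewrite winv_cat -!catA.
Qed.

Lemma nclosureF_conjV g x : N x -> N (winv g ++ x ++ g).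
Proof. by move/(nclosureF_conj (winv g)); rewrite winvK. Qed.

Lemma nclosureF_winv x : N x -> N (winv x).
Proof.
move=> [l [H1 E]]; apply: nclosureF_fred (esym (fred_winv_congr E)) _.
elim: l H1 {E} => [|t l IH] H1; first exact: nclosureF_nil.
rewrite /= !winv_cat; apply: nclosureF_cat.
  by apply: IH => t' Ht'; rewrite H1 // inE Ht' orbT.
rewrite winvK -catA.
have := nclosureF_conj_rel t.1.1 (~~ t.2) (H1 t (mem_head _ _)).
by case: (t.2); rewrite /= ?winvK.
Qed.

Lemma nclosureF_cancel w v : N (w ++ winv v) -> N v -> N w.
Proof.
move=> H1 H2; apply: (@nclosureF_fred ((w ++ winv v) ++ v)); last exact: nclosureF_cat.
by have := fred_cancelV w v [::]; rewrite !cats0 catA.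
Qed.

End NormalClosure.

Lemma nclosureF_wsubst n n' (rels : seq (word n)) (rels' : seq (word n'))
    (h : letter n -> word n') x :
  wsubst_compat h -> (forall r, r \in rels -> in_nclosure_F rels' (wsubst h r)) ->
  in_nclosure_F rels x -> in_nclosure_F rels' (wsubst h x).
Proof.
move=> hP Hr [l [H1 E]]; apply: nclosureF_fred (esym (fred_wsubst_congr hP E)) _.
elim: l H1 {E} => [|t l IH] H1; first exact: nclosureF_nil.
rewrite /= !wsubst_cat catA; apply: nclosureF_cat; last first.
  by apply: IH => t' Ht'; rewrite H1 // inE Ht' orbT.
rewrite -catA (wsubst_winv hP); apply: nclosureF_conj.
case: (t.2); last exact/Hr/H1/mem_head.
by rewrite (wsubst_winv hP); apply/nclosureF_winv/Hr/H1/mem_head.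
Qed.

Definition exp_sum n (y : 'I_n) (w : word n) : int :=
  (\sum_(a <- w) if a.1 == y then (-1) ^+ a.2 else 0)%R.

Lemma exp_sum_cat n y (x z : word n) : exp_sum y (x ++ z) = (exp_sum y x + exp_sum y z)%R.
Proof. by rewrite /exp_sum big_cat. Qed.

Lemma exp_sum_fred n y (w : word n) : exp_sum y (fred w) = exp_sum y w.
Proof.
elim: w => // a w IH; rewrite /fred /= -/(fred w) /exp_sum big_cons -/(exp_sum y w) -IH.
case: (fred w) => [|b s] /=; first by rewrite big_seq1 /exp_sum big_nil addr0.
case: ifP => [/eqP Eb|_]; last by rewrite big_cons.
rewrite /exp_sum big_cons addrA Eb; case: a {Eb} => i [] /=; case: (i == y) => //=;
by rewrite ?expr1 ?expr0 ?addNr ?addrN add0r.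
Qed.

Lemma exp_sum_wpow n y (u : word n) k : exp_sum y (wpow u k) = (exp_sum y u *+ k)%R.
Proof.
elim: k => [|k IH]; first by rewrite mulr0n /exp_sum big_nil.
by rewrite wpowS exp_sum_cat IH mulrS.
Qed.

Lemma exp_sum_unit_not_proper_power n y (u : word n) :
  `|exp_sum y u|%N = 1%N -> ~ proper_power u.
Proof.
move=> Hu [v [k [Hk E]]].
have : exp_sum y u = (exp_sum y v * k%:Z)%R.
  by rewrite -exp_sum_fred E exp_sum_fred exp_sum_wpow -mulr_natr natz.
by move/(congr1 absz); rewrite abszM Hu /=; case: `|_|%N => [|[|a]]; lia.
Qed.

(** * Adjoining generators *)

Lemma split_lshift n m (i : 'I_n) : fintype.split (lshift m i) = inl i.
Proof. exact: (unsplitK (inl i)). Qed.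

Lemma split_rshift n m (j : 'I_m) : fintype.split (rshift n j) = inr j.
Proof. exact: (unsplitK (inr j)). Qed.

Definition lift_letter n m (a : letter n) : word (n + m) := [:: (lshift m a.1, a.2)].

Definition proj_letter n m (a : letter (n + m)) : word n :=
  if fintype.split a.1 is inl i then [:: (i, a.2)] else [::].

Definition liftw n m : word n -> word (n + m) := wsubst (@lift_letter n m).

Definition projw n m : word (n + m) -> word n := wsubst (@proj_letter n m).

Section Lifting.
Variables n m : nat.

Lemma lift_letter_compat : wsubst_compat (@lift_letter n m).
Proof. by case. Qed.

Lemma proj_letter_compat : wsubst_compat (@proj_letter n m).
Proof. by case=> i b; rewrite /proj_letter /=; case: (fintype.split i). Qed.

Lemma liftw_cat (x y : word n) : liftw m (x ++ y) = liftw m x ++ liftw m y.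
Proof. exact: wsubst_cat. Qed.

Lemma liftw_winv (x : word n) : liftw m (winv x) = winv (liftw m x).
Proof. exact/wsubst_winv/lift_letter_compat. Qed.

Lemma liftw_wpow (x : word n) k : liftw m (wpow x k) = wpow (liftw m x) k.
Proof. exact: wsubst_wpow. Qed.

Lemma liftwK : cancel (@liftw n m) (@projw n m).
Proof.
elim=> // a w IH; rewrite /projw /liftw !wsubst_cons /proj_letter /= split_lshift.
by case: a => i b; rewrite -[in RHS]IH.
Qed.

Lemma liftw_not_proper_power (u : word n) :
  ~ proper_power u -> ~ proper_power (liftw m u).
Proof.
move=> Hu [v [k [Hk E]]]; apply: Hu; exists (projw v), k; split => //.
have := fred_wsubst_congr (@proj_letter_compat) E.
by rewrite -/(projw _) liftwK /projw wsubst_wpow.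
Qed.

Lemma exp_sum_liftw (j : 'I_m) (w : word n) : exp_sum (rshift n j) (liftw m w) = 0%R.
Proof.
elim: w => [|a w IH]; first by rewrite /exp_sum big_nil.
rewrite /liftw wsubst_cons exp_sum_cat -/(liftw m w) IH addr0 /exp_sum big_seq1 /=.
by case: eqP => // /(congr1 val) /=; have := ltn_ord a.1; lia.
Qed.

End Lifting.

(* Tietze transformation: adjoin generators y_j (the letters rshift n j) with
   relators y_j^-1 c_j and y_j^(k_j) to a presentation with relators
   u^e, (u, e) in ps. *)
Section Tietze.
Variables (n m : nat) (ps : seq (word n * nat)) (c : 'I_m -> word n) (k : 'I_m -> nat).

Definition ygen (j : 'I_m) : word (n + m) := [:: (rshift n j, false)].

Definition ydef (j : 'I_m) : word (n + m) := (rshift n j, true) :: liftw m (c j).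

Definition tietze_ps : seq (word (n + m) * nat) :=
  [seq (liftw m q.1, q.2) | q <- ps] ++
  [seq (ydef j, 1%N) | j <- index_enum 'I_m] ++
  [seq (ygen j, k j) | j <- index_enum 'I_m].

Definition tietze_rels := [seq wpow q.1 q.2 | q <- tietze_ps].

Local Notation N := (in_nclosure_F tietze_rels).

Definition ysubst (a : letter (n + m)) : word n :=
  match fintype.split a.1 with
  | inl i => [:: (i, a.2)]
  | inr j => if a.2 then winv (c j) else c j
  end.

Lemma nclosure_ydef j : N (ydef j).
Proof.
rewrite -[ydef j]cats0; apply: nclosureF_rel; apply/mapP; exists (ydef j, 1%N) => //.
by rewrite !mem_cat; apply/or3P/Or32/map_f; rewrite mem_index_enum.
Qed.

Lemma nclosure_ypow j : N (wpow (ygen j) (k j)).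
Proof.
apply: nclosureF_rel; apply/mapP; exists (ygen j, k j) => //.
by rewrite !mem_cat; apply/or3P/Or33/map_f; rewrite mem_index_enum.
Qed.

Lemma nclosure_liftw_rel q : q \in ps -> N (liftw m (wpow q.1 q.2)).
Proof.
move=> Hq; rewrite liftw_wpow; apply: nclosureF_rel; apply/mapP.
by exists (liftw m q.1, q.2); rewrite // mem_cat map_f.
Qed.

(* Each letter y_j^(+-1) of w is traded for c_j^(+-1) by means of y_j^-1 c_j. *)
Lemma nclosure_ysubst w : N (w ++ winv (liftw m (wsubst ysubst w))).
Proof.
elim: w => [|a w IH]; first exact: nclosureF_nil.
rewrite wsubst_cons liftw_cat winv_cat.
set X := w ++ _ in IH; set Y := winv (liftw m (ysubst a)).
apply: (@nclosureF_fred _ _ (([:: a] ++ X ++ winv [:: a]) ++ ([:: a] ++ Y))).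
  by have := fred_cancelV ([:: a] ++ X) [:: a] Y; rewrite /X -!catA.
apply: nclosureF_cat; first exact: nclosureF_conj.
rewrite /Y; case: a {IH X Y} => i b; rewrite /ysubst /=.
case Ei: (fintype.split i) => [i0|j].
  have -> : i = lshift m i0 by rewrite -(splitK i) Ei.
  by apply: (@nclosureF_fred _ _ [::]); rewrite /= ?eqxx //; apply: nclosureF_nil.
have -> : i = rshift n j by rewrite -(splitK i) Ei.
case: b; first by rewrite liftw_winv winvK; apply: nclosure_ydef.
apply: nclosureF_fred (nclosureF_conj (ygen j) (nclosureF_winv (nclosure_ydef j))).
have := fred_cancel (ygen j ++ winv (liftw m (c j))) (ygen j) [::].
by rewrite !cats0 -!catA => E; rewrite -[RHS]E /ydef winv_cons -!catA.
Qed.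

Lemma nclosure_liftw_cpow j : N (liftw m (wpow (c j) (k j))).
Proof.
have := nclosure_ysubst (wpow (ygen j) (k j)).
rewrite wsubst_wpow /wsubst /= /ysubst /= split_rshift cats0 -/(wsubst _ _).
move/nclosureF_winv; rewrite winv_cat winvK => /nclosureF_cancel; apply.
exact: nclosure_ypow.
Qed.

Lemma tietze_ps_not_proper_power :
  (forall q, q \in ps -> ~ proper_power q.1 /\ (0 < q.2)%N) ->
  (forall j, (0 < k j)%N) ->
  forall q, q \in tietze_ps -> ~ proper_power q.1 /\ (0 < q.2)%N.
Proof.
move=> Hps Hk q; rewrite !mem_cat => /or3P[] /mapP [x Hx ->] /=.
- by have [? ?] := Hps x Hx; split => //; apply: liftw_not_proper_power.
- split => //; apply: (@exp_sum_unit_not_proper_power _ (rshift n x)).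
  by rewrite /ydef -cat1s exp_sum_cat exp_sum_liftw /exp_sum big_seq1 /= eqxx.
- split => //; apply: (@exp_sum_unit_not_proper_power _ (rshift n x)).
  by rewrite /exp_sum big_seq1 /= eqxx.
Qed.

End Tietze.

Local Open Scope group_scope.

Section Evaluation.
Variables (K : groupType) (n : nat) (f : 'I_n -> K).

Lemma eval_word_cons a x :
  eval_word f (a :: x) = (if a.2 then (f a.1)^-1 else f a.1) * eval_word f x.
Proof. by []. Qed.

Lemma eval_word_cat x y : eval_word f (x ++ y) = eval_word f x * eval_word f y.
Proof. by elim: x => [|a x IH] /=; rewrite ?mul1g // IH mulgA. Qed.

Lemma eval_word_winv x : eval_word f (winv x) = (eval_word f x)^-1.
Proof.
elim: x => [|[i b] x IH]; first by rewrite invg1.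
rewrite winv_cons eval_word_cat IH eval_word_cons invgM /= mulg1.
by case: b; rewrite ?invgK.
Qed.

Lemma eval_word_fred x : eval_word f (fred x) = eval_word f x.
Proof.
elim: x => // a x IH; rewrite /fred /= -/(fred x) -IH.
case: (fred x) => [|b s] //=; case: ifP => [/eqP ->|//].
by rewrite mulgA; case: a => i [] /=; rewrite ?mulgV ?mulVg mul1g.
Qed.

Lemma eval_word_wpow u k : eval_word f (wpow u k) = (eval_word f u) ^+ k.
Proof. by elim: k => // k IH; rewrite wpowS eval_word_cat IH expgS. Qed.

Lemma eval_word_nclosureF rels w :
  (forall r, r \in rels -> eval_word f r = 1) ->
  in_nclosure_F rels w -> eval_word f w = 1.
Proof.
move=> Hr [l [H1 E]]; rewrite -eval_word_fred E eval_word_fred.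
elim: l H1 {E} => // t l IH H1.
rewrite /= !eval_word_cat IH; last by move=> t' Ht'; rewrite H1 // inE Ht' orbT.
have -> : eval_word f (if t.2 then winv t.1.2 else t.1.2) = 1.
  by case: (t.2); rewrite ?eval_word_winv Hr ?invg1 //; apply/H1/mem_head.
by rewrite mul1g mulg1 eval_word_winv mulgV.
Qed.

Lemma eval_word_wsubst n' (h : letter n' -> word n) (g : 'I_n' -> K) w :
  (forall a, eval_word f (h a) = eval_word g [:: a]) ->
  eval_word f (wsubst h w) = eval_word g w.
Proof.
by move=> Hh; elim: w => // a w IH; rewrite wsubst_cons eval_word_cat IH Hh /= mulg1.
Qed.

End Evaluation.

Section Morphism.
Variables (G Q : groupType) (p : G -> Q).
Hypothesis p_hom : forall x y, p (x * y) = p x * p y.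

Lemma hom1 : p 1 = 1.
Proof. by apply: (mulIg (p 1)); rewrite -p_hom !mul1g. Qed.

Lemma homV x : p x^-1 = (p x)^-1.
Proof. by apply: (mulIg (p x)); rewrite -p_hom !mulVg hom1. Qed.

Lemma homX x k : p (x ^+ k) = (p x) ^+ k.
Proof. by elim: k => [|k IH]; rewrite ?hom1 // !expgS p_hom IH. Qed.

Lemma eval_word_hom n (f : 'I_n -> G) w :
  eval_word (fun i => p (f i)) w = p (eval_word f w).
Proof.
elim: w => [|a w IH]; first by rewrite hom1.
by rewrite /= IH p_hom; case: (a.2); rewrite ?homV.
Qed.

End Morphism.

(** * The finite residual *)

Section FiniteResidual.
Variable K : groupType.

Lemma conj_finite_index_subgroup (H : K -> Prop) t :
  is_subgroup H -> finite_index H ->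
  is_subgroup (fun x => H (x ^ t)) /\ finite_index (fun x => H (x ^ t)).
Proof.
move=> [H1 [HM HV]] [reps Hreps]; split.
  split; first by rewrite conj1g.
  by split=> [x y Hx Hy|x Hx]; rewrite ?conjMg ?conjVg; [apply: HM|apply: HV].
exists [seq r ^ t^-1 | r <- reps] => x.
have [r Hr Hx] := Hreps (x ^ t).
exists (r ^ t^-1); first exact: map_f.
by rewrite conjMg conjVg conjgKV.
Qed.

Lemma finres1 : in_finres (1 : K).
Proof. by move=> H []. Qed.

Lemma finresM (x y : K) : in_finres x -> in_finres y -> in_finres (x * y).
Proof.
by move=> Hx Hy H HH Hf; case: (HH) => _ [HM _]; apply: HM; [apply: Hx|apply: Hy].
Qed.

Lemma finresV (x : K) : in_finres x -> in_finres x^-1.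
Proof. by move=> Hx H HH Hf; case: (HH) => _ [_ HV]; apply: HV; apply: Hx. Qed.

Lemma finresJ (x t : K) : in_finres x -> in_finres (x ^ t).
Proof.
by move=> Hx H HH Hf; have [] := conj_finite_index_subgroup t HH Hf; apply: Hx.
Qed.

Lemma nclosure_finres (S : seq K) x :
  (forall s, s \in S -> in_finres s) -> in_nclosure S x -> in_finres x.
Proof.
move=> HS [l [Hl ->]]; elim: l Hl => [|t l IH] Hl /=; first exact: finres1.
apply: finresM; last by apply: IH => t' Ht'; rewrite Hl // inE Ht' orbT.
rewrite -mulgA -conjgE; apply: finresJ.
by have := HS _ (Hl t (mem_head _ _)); case: (t.2) => //; apply: finresV.
Qed.

End FiniteResidual.

(** * Orders modulo the finite residual *)

Local Close Scope group_scope.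
Local Open Scope ring_scope.
Local Open Scope ereal_scope.
Local Open Scope classical_set_scope.

Section OrderModResidual.
Variable R : realType.

Lemma ord_mod_res_le (K1 K2 : groupType) (x : K1) (y : K2) :
  (forall k, (0 < k)%N -> in_finres (y ^+ k)%g -> in_finres (x ^+ k)%g) ->
  ord_mod_res R x <= ord_mod_res R y.
Proof.
move=> H; apply/ereal_inf_le_tmp/image_subset => k /= [k0 Hk].
by split => //; apply: H.
Qed.

Lemma ord_mod_res_ge1 (K : groupType) (x : K) : 1 <= ord_mod_res R x.
Proof. by apply: le_ereal_inf_tmp => _ [k [k0 _] <-]; rewrite lee_fin ler1n. Qed.

Lemma ord_mod_res_invg (K : groupType) (x : K) : ord_mod_res R x <= ord_mod_res R x^-1%g.
Proof. by apply: ord_mod_res_le => k _; rewrite expVgn => /finresV; rewrite invgK. Qed.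

Lemma einv_ge0 (x : \bar R) : 1 <= x -> (0 <= einv x)%R.
Proof.
by case: x => // r; rewrite lee_fin /= => /(le_trans ler01) r_ge0; rewrite invr_ge0.
Qed.

Lemma einv_le1 (x : \bar R) : 1 <= x -> (einv x <= 1)%R.
Proof.
by case: x => // r; rewrite lee_fin /= => r_ge1; rewrite invf_le1 // (lt_le_trans ltr01).
Qed.

Lemma einv_le (x y : \bar R) : 1 <= x -> x <= y -> (einv y <= einv x)%R.
Proof.
case: x => [r||] //; case: y => [t||] //=; rewrite ?lee_fin => r_ge1 r_le_t.
  by rewrite lef_pV2 // posrE (lt_le_trans ltr01) // (le_trans r_ge1).
by rewrite invr_ge0 (le_trans ler01).
Qed.

Lemma einv_le_inv (c : R) (x : \bar R) : (0 < c)%R -> c%:E < x -> (einv x <= c^-1)%R.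
Proof.
case: x => [r||] //= c_gt0; last by rewrite invr_ge0 ltW.
by rewrite lte_fin => c_lt_r; rewrite lef_pV2 ?posrE ?ltW // (lt_trans c_gt0).
Qed.

Lemma inv_einvD_lt (x : \bar R) (e : R) : 1 <= x -> (0 < e)%R -> ((einv x + e)^-1)%:E < x.
Proof.
case: x => [r||] //= r_ge1 e_gt0; last by rewrite ltry.
have r_gt0 : (0 < r)%R by rewrite (lt_le_trans ltr01) -?lee_fin.
rewrite lte_fin -[X in (_ < X)%R]invrK ltf_pV2 ?posrE ?invr_gt0 ?ltrDl //.
by rewrite addr_gt0 // invr_gt0.
Qed.

Lemma nu_root_approx (K : groupType) (s : K) (e : R) : in_finres s -> (0 < e)%R ->
  exists2 a : K, exists z, gexpz a z = s &
    (einv (ord_mod_res R a) <= einv (nu R s) + e)%R.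
Proof.
move=> Hs e_gt0.
have nuE :
    nu R s = ereal_sup [set ord_mod_res R a | a in [set a | exists z, gexpz a z = s]].
  by rewrite /nu asboolT.
have nu_ge1 : 1 <= nu R s.
  rewrite nuE; apply: le_trans (ord_mod_res_ge1 s) _; apply: ereal_sup_ubound.
  by exists s => //; exists 1%R; rewrite /= expg1.
have := inv_einvD_lt nu_ge1 e_gt0.
rewrite [X in _ < X]nuE => /ereal_sup_gt[_ [a Ha <-] Hlt].
exists a => //; rewrite -[X in (_ <= X)%R]invrK; apply: einv_le_inv Hlt.
by rewrite invr_gt0 ltr_wpDl // einv_ge0.
Qed.

Lemma root_pos_exponent (K : groupType) (a s : K) (z : int) : gexpz a z = s -> s <> 1%g ->
  exists b k, [/\ (0 < k)%N, (b ^+ k)%g = s & ord_mod_res R a <= ord_mod_res R b].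
Proof.
case: z => k /= Ea s_neq1.
  by exists a, k; split => //; case: k Ea => // Ea; rewrite -Ea expg0 in s_neq1.
by exists a^-1%g, k.+1; split; rewrite ?expVgn ?ord_mod_res_invg.
Qed.

End OrderModResidual.

(** * The quotient G/H *)

Section Quotient.
Local Close Scope ereal_scope.
Local Close Scope ring_scope.
Local Open Scope group_scope.

Variables (R : realType) (G Q : groupType) (S : seq G) (p : G -> Q).
Hypotheses (p_hom : forall x y, p (x * y) = p x * p y)
           (p_surj : forall y, exists x, p x = y)
           (p_ker : forall x, p x = 1 <-> in_nclosure S x)
           (S_finres : forall s, s \in S -> in_finres s).

Local Notation m := (size S).

Lemma hom_nclosure s : s \in S -> p s = 1.
Proof.
move=> Hs; apply/p_ker; exists [:: (1, s, false)]; split.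
  by move=> t; rewrite inE => /eqP ->.
by rewrite /= invg1 mul1g !mulg1.
Qed.

(* The image of a finite index subgroup containing ker p = <<S>> has finite
   index in Q, and its preimage is the subgroup itself. *)
Lemma finres_hom_preim x : in_finres (p x) -> in_finres x.
Proof.
move=> Hpx K [K1 [KM KV]] [reps Hreps].
pose KQ y := exists2 z, K z & p z = y.
have KQ_subgroup : is_subgroup KQ.
  split; first by exists 1; rewrite ?(hom1 p_hom).
  split=> [_ _ [a Ha <-] [b Hb <-]|_ [a Ha <-]].
    by exists (a * b); [apply: KM|rewrite p_hom].
  by exists a^-1; [apply: KV|rewrite (homV p_hom)].
have KQ_finite_index : finite_index KQ.
  exists (map p reps) => y; have [z <-] := p_surj y.
  have [r Hr Krz] := Hreps z.
  by exists (p r); [apply: map_f|exists (r^-1 * z); rewrite // p_hom (homV p_hom)].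
have [z Kz Ez] := Hpx KQ KQ_subgroup KQ_finite_index.
have Kxz : K (x * z^-1).
  have : in_finres (x * z^-1).
    apply: (nclosure_finres S_finres); apply/p_ker.
    by rewrite p_hom (homV p_hom) Ez mulgV.
  by apply; [split|exists reps].
by have := KM _ _ Kxz Kz; rewrite mulgVK.
Qed.

Lemma einv_ord_mod_res_hom g : (einv (ord_mod_res R (p g)) <= einv (ord_mod_res R g))%R.
Proof.
apply: einv_le; first exact: ord_mod_res_ge1.
by apply: ord_mod_res_le => k _; rewrite -(homX p_hom); apply: finres_hom_preim.
Qed.

Section Extension.
Variables (n : nat) (ps : seq (word n * nat)) (f : 'I_n -> G).
Hypothesis f_pres : is_presentation [seq wpow q.1 q.2 | q <- ps] f.
Variables (b : 'I_m -> G) (k : 'I_m -> nat) (c : 'I_m -> word n).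
Hypotheses (c_b : forall j, eval_word f (c j) = b j)
           (b_root : forall j, b j ^+ k j = nth 1 S j).

Definition tietze_gens (i : 'I_(n + m)) : Q :=
  match fintype.split i with inl i0 => p (f i0) | inr j => p (b j) end.

Local Notation N := (in_nclosure_F (tietze_rels ps c k)).

Lemma eval_tietze_liftw w : eval_word tietze_gens (liftw m w) = p (eval_word f w).
Proof.
rewrite -(eval_word_hom p_hom) (eval_word_wsubst (g := fun i => p (f i))) //.
by case=> i b'; rewrite /= /tietze_gens split_lshift.
Qed.

Lemma eval_tietze_rels r : r \in tietze_rels ps c k -> eval_word tietze_gens r = 1.
Proof.
case/mapP=> q; rewrite !mem_cat => /or3P[] /mapP [x Hx ->] -> /=.
- rewrite -liftw_wpow eval_tietze_liftw.
  have -> : eval_word f (wpow x.1 x.2) = 1 by apply/f_pres.2/nclosureF_rel/map_f.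
  exact: hom1.
- by rewrite cats0 /tietze_gens split_rshift eval_tietze_liftw c_b mulVg.
- by rewrite eval_word_wpow /= /tietze_gens split_rshift mulg1 -(homX p_hom) b_root
     hom_nclosure ?mem_nth.
Qed.

(* s_j is represented by c_j^(k_j), whose lift is a consequence of the new
   relators. *)
Lemma nclosure_lift_kernel x :
  in_nclosure S x -> exists2 P : word n, N (liftw m P) & eval_word f P = x.
Proof.
move=> [l [Hl ->]]; elim: l Hl => [|t l IH] Hl /=.
  by exists [::]; [apply: nclosureF_nil|].
have [|P NP EP] := IH; first by move=> t' Ht'; rewrite Hl // inE Ht' orbT.
have s_in : t.1.2 \in S := Hl t (mem_head _ _).
have j_lt : (index t.1.2 S < m)%N by rewrite index_mem.
pose W := wpow (c (Ordinal j_lt)) (k (Ordinal j_lt)).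
have EW : eval_word f W = t.1.2 by rewrite eval_word_wpow c_b b_root nth_index.
have [g Eg] := f_pres.1 t.1.1.
exists ((winv g ++ (if t.2 then winv W else W) ++ g) ++ P).
  rewrite !liftw_cat liftw_winv; apply: nclosureF_cat => //; apply: nclosureF_conjV.
  case: (t.2); rewrite ?liftw_winv; last exact: nclosure_liftw_cpow.
  exact/nclosureF_winv/nclosure_liftw_cpow.
rewrite eval_word_cat EP !eval_word_cat eval_word_winv Eg; congr (_ * _).
by case: (t.2); rewrite ?eval_word_winv EW mulgA.
Qed.

(* Substituting c_j for y_j maps a relation of G/H to a relation of G modulo
   ker p; the previous lemma lifts that kernel element back. *)
Lemma tietze_presentation : is_presentation (tietze_rels ps c k) tietze_gens.
Proof.
split=> [y|w].
  have [x <-] := p_surj y; have [w <-] := f_pres.1 x.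
  by exists (liftw m w); apply: eval_tietze_liftw.
split; last exact: eval_word_nclosureF eval_tietze_rels.
move=> w1; have Nw := nclosure_ysubst ps c k w.
set sw := wsubst (ysubst c) w in Nw.
have p_sw : p (eval_word f sw) = 1.
  have := eval_word_nclosureF eval_tietze_rels Nw.
  rewrite eval_word_cat eval_word_winv w1 mul1g eval_tietze_liftw.
  by move/eqP; rewrite invg_eq1 => /eqP.
have [P NP EP] := nclosure_lift_kernel ((p_ker _).1 p_sw).
have : in_nclosure_F [seq wpow q.1 q.2 | q <- ps] (sw ++ winv P).
  by apply/f_pres.2; rewrite eval_word_cat eval_word_winv EP mulgV.
move/(nclosureF_wsubst (@lift_letter_compat n m) (rels' := tietze_rels ps c k)).
rewrite -/(liftw m _) liftw_cat liftw_winv => Nsw.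
apply: (nclosureF_cancel Nw); apply: nclosureF_cancel NP; apply: Nsw.
by move=> _ /mapP[q Hq ->]; apply: nclosure_liftw_rel.
Qed.

Lemma tietze_cost_le :
  (\sum_(q <- tietze_ps ps c k) einv (ord_mod_res R (eval_word tietze_gens q.1)) <=
   \sum_(q <- ps) einv (ord_mod_res R (eval_word f q.1)) + m%:R +
   \sum_(j < m) einv (ord_mod_res R (b j)))%R.
Proof.
rewrite !big_cat !big_map /= addrA; apply: lerD; first apply: lerD.
- by apply: ler_sum => q _; rewrite eval_tietze_liftw einv_ord_mod_res_hom.
- rewrite -[m in X in (_ <= X)%R]card_ord -sumr_const.
  by apply: ler_sum => j _; apply/einv_le1/ord_mod_res_ge1.
- apply: ler_sum => j _.
  by rewrite /= /tietze_gens split_rshift mulg1 einv_ord_mod_res_hom.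
Qed.

End Extension.

Lemma exists_roots_relsize_approx n (f : 'I_n -> G) (e : R) :
  (forall x, exists w, eval_word f w = x) ->
  (forall s, s \in S -> s <> 1) -> (0 < e)%R ->
  exists (b : 'I_m -> G) (k : 'I_m -> nat) (c : 'I_m -> word n),
    [/\ forall j, (0 < k j)%N, forall j, eval_word f (c j) = b j,
        forall j, b j ^+ k j = nth 1 S j &
        (\sum_(j < m) einv (ord_mod_res R (b j)) <= relsize R S + e)%R].
Proof.
move=> f_gen S_neq1 e_gt0; pose e' := (e / (m%:R + 1))%R.
have e'_gt0 : (0 < e')%R by rewrite divr_gt0 // ltr_wpDl.
have root (j : 'I_m) : exists t : G * nat * word n,
    [/\ (0 < t.1.2)%N, eval_word f t.2 = t.1.1, t.1.1 ^+ t.1.2 = nth 1 S j &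
        (einv (ord_mod_res R t.1.1) <= einv (nu R (nth 1%g S j)) + e')%R].
  have s_in := mem_nth 1 (ltn_ord j).
  have [a [z Ez] Ha] := nu_root_approx (S_finres s_in) e'_gt0.
  have [b [k' [k_gt0 Eb Hord]]] := root_pos_exponent R Ez (S_neq1 _ s_in).
  have [c Ec] := f_gen b.
  exists (b, k', c); split => //.
  exact: le_trans (einv_le (ord_mod_res_ge1 _ _) Hord) Ha.
have [F HF] := boolp.choice root.
exists (fun j => (F j).1.1), (fun j => (F j).1.2), (fun j => (F j).2).
split=> [j|j|j|]; try by case: (HF j).
have b_approx j : (einv (ord_mod_res R (F j).1.1) <= einv (nu R (nth 1%g S j)) + e')%R.
  by case: (HF j).
rewrite /relsize (big_nth 1) big_mkord.
apply: le_trans (ler_sum _ (fun j _ => b_approx j)) _.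
rewrite big_split /= sumr_const card_ord lerD2l -mulr_natl /e' mulrA.
by rewrite ler_pdivrMr ?ltr_wpDl // mulrDr mulr1 mulrC lerDl ltW.
Qed.

Lemma rdef_quot_ge_presentation n (ps : seq (word n * nat)) (f : 'I_n -> G) (e : R) :
  (forall s, s \in S -> s <> 1) ->
  (forall q, q \in ps -> ~ proper_power q.1 /\ (0 < q.2)%N) ->
  is_presentation [seq wpow q.1 q.2 | q <- ps] f -> (0 < e)%R ->
  ((n%:R - \sum_(q <- ps) einv (ord_mod_res R (eval_word f q.1)) - (relsize R S + e))%:E
     <= rdef R Q)%E.
Proof.
move=> S_neq1 ps_ok f_pres e_gt0.
have [b [k [c [k_gt0 c_b b_root sum_b]]]] :=
  exists_roots_relsize_approx f_pres.1 S_neq1 e_gt0.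
pose cost := (\sum_(q <- tietze_ps ps c k)
  einv (ord_mod_res R (eval_word (tietze_gens f b) q.1)))%R.
apply: (@le_trans _ _ (((n + m)%:R - cost)%:E)).
  by rewrite lee_fin natrD; have := tietze_cost_le ps f b k c; rewrite -/cost; lra.
apply: ereal_sup_ubound; exists (n + m)%N, (tietze_ps ps c k), (tietze_gens f b).
split; first exact: tietze_ps_not_proper_power.
by split; first exact: tietze_presentation.
Qed.

End Quotient.

Theorem mainTheorem16 (R : realType) (G : groupType)
  (fpG : finitely_presented G)
  (RGnontriv : exists g : G, in_finres g /\ g <> 1%g)
  (S : seq G)
  (hS : forall s, s \in S -> s <> 1%g /\ in_finres s)
  (Q : groupType) (p : G -> Q)
  (p_hom : forall x y : G, p (x * y)%g = (p x * p y)%g)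
  (p_surj : forall y : Q, exists x : G, p x = y)
  (p_ker : forall x : G, p x = 1%g <-> in_nclosure S x) :
  (rdef R G - (relsize R S)%:E <= rdef R Q)%E.
Proof.
rewrite leeBlDr //; apply: ge_ereal_sup => _ [n [ps [f [ps_ok [f_pres ->]]]]].
apply/lee_addgt0Pr => e e_gt0.
have := rdef_quot_ge_presentation p_hom p_surj p_ker (fun s Hs => (hS s Hs).2)
  (fun s Hs => (hS s Hs).1) ps_ok f_pres e_gt0.
by rewrite -addeA -EFinD -leeBlDr // -EFinB.
Qed.
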